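(* The $1$-matching complex $M_1(G)$ of any finite fully whiskered graph $G$ is vertex decomposable.
   Context: A fully whiskered graph is a finite simple graph in which every vertex that is not a leaf (degree $\neq 1$) is adjacent to at least one leaf vertex. The $1$-matching complex $M_1(G)$ is the simplicial complex whose simplices are the sets $\sigma\subseteq E(G)$ of pairwise non-adjacent edges (matchings), i.e. every vertex of $G$ is incident to at most one edge of $\sigma$. For a simplicial complex $K$ and a vertex $v$, $\mathrm{lk}(v,K)=\{\tau\in K: v\notin\tau,\ \tau\cup\{v\}\in K\}$ and $\mathrm{del}(v,K)=\{\tau\in K: v\notin\tau\}$. A simplicial complex $K$ is vertex decomposable if $K$ is a simplex (the set of all subsets of a finite set, including $\{\emptyset\}$), or $K$ contains a vertex $v$ such that (i) both $\mathrm{lk}(v,K)$ and $\mathrm{del}(v,K)$ are vertex decomposable, and (ii) every facet (maximal simplex) of $\mathrm{del}(v,K)$ is a facet of $K$. *)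

From mathcomp Require Import all_boot.
Set Implicit Arguments. Unset Strict Implicit. Unset Printing Implicit Defensive.

Definition simple_graph (T : finType) (g : rel T) : Prop :=
  symmetric g /\ irreflexive g.

Definition degree (T : finType) (g : rel T) (x : T) : nat := #|[set y | g x y]|.

Definition is_leaf (T : finType) (g : rel T) (x : T) : bool := degree g x == 1.

Definition fully_whiskered (T : finType) (g : rel T) : Prop :=
  forall x : T, degree g x != 1 -> exists y : T, g x y && is_leaf g y.

Definition is_edge (T : finType) (g : rel T) (e : {set T}) : bool :=
  [exists x, exists y, g x y && (e == [set x; y])].

Definition lk (V : finType) (v : V) (K : {set {set V}}) : {set {set V}} :=
  [set t in K | (v \notin t) && (v |: t \in K)].

Definition del (V : finType) (v : V) (K : {set {set V}}) : {set {set V}} :=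
  [set t in K | v \notin t].

Definition is_facet (V : finType) (K : {set {set V}}) (s : {set V}) : bool :=
  (s \in K) && [forall t in K, (s \subset t) ==> (t == s)].

(* a simplex: the set of all subsets of a finite set A (A = set0 gives {∅}) *)
Definition is_simplex (V : finType) (K : {set {set V}}) : Prop :=
  exists A : {set V}, K = powerset A.

Inductive vertex_decomposable (V : finType) : {set {set V}} -> Prop :=
  | vd_simplex (K : {set {set V}}) : is_simplex K -> vertex_decomposable K
  | vd_shed (K : {set {set V}}) (v : V) :
      [set v] \in K ->
      vertex_decomposable (lk v K) ->
      vertex_decomposable (del v K) ->
      (forall s, is_facet (del v K) s -> is_facet K s) ->
      vertex_decomposable K.

Definition matching_complex (T : finType) (g : rel T) : {set {set {set T}}} :=
  [set s : {set {set T}} |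
    [forall e in s, is_edge g e] &&
    [forall x : T, #|[set e in s | x \in e]| <= 1]].

(* We prove more generally that M_1(G) is vertex decomposable whenever every
   vertex of degree at least 2 has a leaf neighbour ("branches are
   whiskered"), by induction on the number of edges.
   - If every vertex has degree at most 1, the edges are pairwise disjoint and
     M_1(G) is the full simplex on E(G).
   - Otherwise pick x of degree >= 2, a leaf l adjacent to x and another edge
     xw with w <> l.  The edge xw is a shedding vertex of M_1(G):
     its deletion is M_1(G - xw), its link is M_1(G - x - w), and a facet of
     the deletion cannot be enlarged by xw, since a matching avoiding x could
     instead be enlarged by the whisker xl.
   - Both G - xw and G - x - w are again simple, have whiskered branches and
     fewer edges, so induction applies. *)
From mathcomp Require Import all_boot.
Set Implicit Arguments. Unset Strict Implicit. Unset Printing Implicit Defensive.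

Definition remove_edge (T : finType) (g : rel T) (x w : T) : rel T :=
  fun a b => g a b && ~~ ((a == x) && (b == w) || (a == w) && (b == x)).

Definition remove_ends (T : finType) (g : rel T) (x w : T) : rel T :=
  fun a b => [&& g a b, a \notin [set x; w] & b \notin [set x; w]].

(* Every vertex of degree at least 2 is adjacent to a leaf; this is the part
   of being fully whiskered that survives edge deletions. *)
Definition whiskered_branches (T : finType) (g : rel T) : Prop :=
  forall z, 1 < degree g z -> exists l, g z l && is_leaf g l.

(* Number of edges, counted as ordered pairs: the induction measure. *)
Definition edge_count (T : finType) (g : rel T) : nat :=
  #|[set p : T * T | g p.1 p.2]|.

Lemma eq_set2 (T : finType) (a b x y : T) : a != b ->
  ([set a; b] == [set x; y]) = ((a == x) && (b == y) || (a == y) && (b == x)).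
Proof.
move=> ab; apply/eqP/idP => [E|]; last first.
  by case/orP=> /andP[/eqP-> /eqP->] //; rewrite setUC.
have ha : a \in [set x; y] by rewrite -E !inE eqxx.
have hb : b \in [set x; y] by rewrite -E !inE eqxx orbT.
have hx : x \in [set a; b] by rewrite E !inE eqxx.
have hy : y \in [set a; b] by rewrite E !inE eqxx orbT.
move: ha hb hx hy ab; rewrite !inE.
by case/orP=> /eqP->; case/orP=> /eqP->; rewrite ?eqxx //= ?orbT.
Qed.

Lemma degree_sub (T : finType) (g g' : rel T) z :
  (forall a b, g' a b -> g a b) -> degree g' z <= degree g z.
Proof.
by move=> sub; apply: subset_leq_card; apply/subsetP => y; rewrite !inE; apply: sub.
Qed.

Lemma edge_count_sub (T : finType) (g g' : rel T) x w :
  (forall a b, g' a b -> g a b) -> g x w -> ~~ g' x w ->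
  edge_count g' < edge_count g.
Proof.
move=> sub gxw ng'xw; apply: proper_card; apply/properP; split.
  by apply/subsetP => p; rewrite !inE; apply: sub.
by exists (x, w); rewrite inE.
Qed.

Lemma simple_remove_edge (T : finType) (g : rel T) x w :
  simple_graph g -> simple_graph (remove_edge g x w).
Proof.
case=> sym irr; split; [move=> a b | move=> a]; last by rewrite /remove_edge irr.
by rewrite /remove_edge sym orbC !(andbC (b == _)).
Qed.

Lemma simple_remove_ends (T : finType) (g : rel T) x w :
  simple_graph g -> simple_graph (remove_ends g x w).
Proof.
case=> sym irr; split; [move=> a b | move=> a]; last by rewrite /remove_ends irr.
by rewrite /remove_ends (sym a b); congr (_ && _); rewrite andbC.
Qed.

Lemma fully_whiskered_branches (T : finType) (g : rel T) :
  fully_whiskered g -> whiskered_branches g.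
Proof. by move=> fw z dz; apply: fw; rewrite neq_ltn dz orbT. Qed.

Lemma matchingP (T : finType) (g : rel T) s :
  s \in matching_complex g <->
  (forall e, e \in s -> is_edge g e) /\
  (forall z e1 e2, e1 \in s -> e2 \in s -> z \in e1 -> z \in e2 -> e1 = e2).
Proof.
rewrite inE; split => [/andP[/forall_inP edges /forallP deg1]|[edges disj]].
  split=> // z e1 e2 e1s e2s ze1 ze2.
  by apply: (card_le1_eqP (deg1 z)); rewrite inE ?e1s ?e2s ?ze1 ?ze2.
apply/andP; split; first exact/forall_inP.
apply/forallP => z; apply/card_le1_eqP => e1 e2; rewrite !inE.
by case/andP=> e1s ze1 /andP[e2s ze2]; apply: (disj z).
Qed.

Section MatchingComplex.

Variables (T : finType) (g : rel T).

Lemma edge_set2 a b : g a b -> is_edge g [set a; b].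
Proof. by move=> gab; apply/existsP; exists a; apply/existsP; exists b; rewrite gab eqxx. Qed.

Lemma leaf_neighbour_uniq l a b : is_leaf g l -> g l a -> g l b -> a = b.
Proof.
move=> /eqP leaf gla glb.
have : #|[set y | g l y]| <= 1 by rewrite -/(degree g l) leaf.
by move/card_le1_eqP; apply; rewrite inE.
Qed.

Lemma edge_in_matching_complex x w : g x w -> [set [set x; w]] \in matching_complex g.
Proof.
move=> gxw; apply/matchingP; split => [e|z e1 e2]; rewrite !inE.
  by move/eqP->; apply: edge_set2.
by move=> /eqP-> /eqP->.
Qed.

Lemma lk_matching_complex x w : g x w ->
  lk [set x; w] (matching_complex g) = matching_complex (remove_ends g x w).
Proof.
move=> gxw; have edge_ends e :
    is_edge (remove_ends g x w) e = [&& is_edge g e, x \notin e & w \notin e].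
  apply/existsP/and3P => [[a /existsP[b /andP[/and3P[gab na nb] /eqP->]]]|].
    move: na nb; rewrite !inE !negb_or => /andP[ax aw] /andP[bx bw].
    by rewrite !(eq_sym x) !(eq_sym w) ax aw bx bw; split=> //; apply: edge_set2.
  case=> /existsP[a /existsP[b /andP[gab /eqP->]]]; rewrite !inE !negb_or.
  move=> /andP[xa xb] /andP[wa wb]; exists a; apply/existsP; exists b.
  by rewrite /remove_ends gab !inE !negb_or !(eq_sym a) !(eq_sym b) xa xb wa wb eqxx.
apply/setP => s; rewrite [in LHS]inE; apply/and3P/idP.
  case=> /matchingP[edges _] nxw /matchingP[_ disj]; apply/matchingP.
  split=> [e es|z e1 e2 e1s e2s]; last by apply: disj; rewrite inE ?e1s ?e2s orbT.
  have avoid z : z \in [set x; w] -> z \notin e.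
    move=> zxw; apply: contraNN nxw => ze.
    by rewrite -(disj z e [set x; w]) // !inE ?es ?eqxx ?orbT.
  by rewrite edge_ends edges // !avoid // !inE eqxx ?orbT.
move/matchingP=> [edges disj].
have avoid e : e \in s -> x \notin e /\ w \notin e.
  by move/edges; rewrite edge_ends => /and3P[].
split.
- apply/matchingP; split=> // e /edges; rewrite edge_ends; by case/and3P.
- by apply/negP => /avoid []; rewrite !inE eqxx.
apply/matchingP; split=> [e|z e1 e2].
  rewrite !inE => /orP[/eqP->|/edges]; first exact: edge_set2.
  by rewrite edge_ends => /and3P[].
have far e : e \in s -> z \in [set x; w] -> z \notin e.
  by case/avoid => nx nw; rewrite !inE => /orP[]/eqP->.
rewrite !inE => /orP[/eqP->|e1s] /orP[/eqP->|e2s] //.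
- by move=> zxw ze2; have := far _ e2s zxw; rewrite ze2.
- by move=> ze1 zxw; have := far _ e1s zxw; rewrite ze1.
- exact: disj.
Qed.

Hypothesis sym : symmetric g.

Lemma edge_at e z : is_edge g e -> z \in e -> exists y, g z y /\ e = [set z; y].
Proof.
move=> /existsP[a /existsP[b /andP[gab /eqP->]]]; rewrite !inE.
by case/orP=> /eqP->; [exists b | exists a; rewrite sym setUC].
Qed.

Lemma matching_complex_simplex :
  (forall z, degree g z <= 1) -> is_simplex (matching_complex g).
Proof.
move=> deg1; exists [set e | is_edge g e].
apply/setP => s; rewrite powersetE; apply/idP/subsetP.
  by case/matchingP => edges _ e es; rewrite inE edges.
move=> sub; apply/matchingP; split => [e /sub|z e1 e2 /sub + /sub]; rewrite ?inE //.
move=> ed1 ed2 ze1 ze2.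
have [y1 [gzy1 ->]] := edge_at ed1 ze1.
have [y2 [gzy2 ->]] := edge_at ed2 ze2.
by rewrite (card_le1_eqP (deg1 z) y1 y2) // inE.
Qed.

Hypothesis irr : irreflexive g.

Lemma edge_remove_edge x w e : x != w ->
  is_edge (remove_edge g x w) e = is_edge g e && (e != [set x; w]).
Proof.
have distinct a b : g a b -> a != b by move=> gab; apply: contraTneq gab => ->; rewrite irr.
move=> xw; apply/idP/andP.
  case/existsP=> a /existsP[b /andP[/andP[gab nab] /eqP->]].
  by rewrite eq_set2 ?distinct // nab edge_set2.
case=> /existsP[a /existsP[b /andP[gab /eqP E]]] ne.
apply/existsP; exists a; apply/existsP; exists b.
by rewrite /remove_edge gab -eq_set2 ?distinct // -E ne E eqxx.
Qed.

Lemma del_matching_complex x w : x != w ->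
  del [set x; w] (matching_complex g) = matching_complex (remove_edge g x w).
Proof.
move=> xw; apply/setP => s; rewrite [in LHS]inE; apply/andP/idP.
  case=> /matchingP[edges disj] nxw; apply/matchingP; split=> // e es.
  by rewrite edge_remove_edge // edges //=; apply: contraNneq nxw => <-.
move/matchingP=> [edges disj]; split.
  by apply/matchingP; split=> // e /edges; rewrite edge_remove_edge // => /andP[].
by apply/negP => /edges; rewrite edge_remove_edge // eqxx andbF.
Qed.

Lemma add_whisker x l s :
  g x l -> is_leaf g l -> s \in matching_complex g ->
  (forall e, e \in s -> x \notin e) -> [set x; l] |: s \in matching_complex g.
Proof.
move=> gxl leaf /matchingP[edges disj] nx.
have avoid z e : e \in s -> z \in [set x; l] -> z \notin e.
  move=> es; rewrite !inE => /orP[]/eqP->; first exact: nx.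
  apply/negP => le; have [y [gly E]] := edge_at (edges e es) le.
  have yx : y = x by apply: (leaf_neighbour_uniq leaf); rewrite // sym.
  by move: (nx e es); rewrite E yx !inE eqxx orbT.
apply/matchingP; split=> [e|z e1 e2].
  by rewrite !inE => /orP[/eqP->|/edges//]; apply: edge_set2.
rewrite !inE => /orP[/eqP->|e1s] /orP[/eqP->|e2s] //.
- by move=> z12 ze2; have := avoid _ _ e2s z12; rewrite ze2.
- by move=> ze1 z12; have := avoid _ _ e1s z12; rewrite ze1.
- exact: disj.
Qed.

(* Shedding condition: every facet of the deletion of xw is a facet of
   M_1(G), because of the whisker xl with l <> w. *)
Lemma del_facet_is_facet x w l :
  g x w -> g x l -> is_leaf g l -> l != w ->
  forall s, is_facet (del [set x; w] (matching_complex g)) s ->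
            is_facet (matching_complex g) s.
Proof.
move=> gxw gxl leaf lw s /andP[]; rewrite inE => /andP[sK nxw] /forall_inP maxl.
have xw : x != w by apply: contraTneq gxw => ->; rewrite irr.
rewrite /is_facet sK; apply/forall_inP => t tK; apply/implyP => st.
have [xwt|nxwt] := boolP ([set x; w] \in t); last first.
  by have := maxl t; rewrite inE tK nxwt st => /(_ isT).
have [e es xe] : exists2 e, e \in s & x \in e.
  apply/exists_inP; apply: contraTT isT => /exists_inPn nx.
  have extK : [set x; l] |: s \in del [set x; w] (matching_complex g).
    rewrite inE add_whisker // !inE negb_or nxw andbT.
    by rewrite eq_set2 // eqxx (eq_sym w l) (negbTE lw) (eq_sym w x) (negbTE xw) !andbF.
  have := maxl _ extK; rewrite subsetUr => /eqP sE.
  by have := nx [set x; l]; rewrite -sE !inE !eqxx => /(_ isT).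
case/matchingP: tK => _ disj.
have exw : e = [set x; w].
  by apply: (disj x) => //; [exact: (subsetP st) | rewrite !inE eqxx].
by move: nxw; rewrite -exw es.
Qed.

Lemma vd_shed_edge x w l :
  g x w -> g x l -> is_leaf g l -> l != w ->
  vertex_decomposable (matching_complex (remove_ends g x w)) ->
  vertex_decomposable (matching_complex (remove_edge g x w)) ->
  vertex_decomposable (matching_complex g).
Proof.
move=> gxw gxl leaf lw vd_lk vd_del.
have xw : x != w by apply: contraTneq gxw => ->; rewrite irr.
apply: (vd_shed (v := [set x; w])).
- exact: edge_in_matching_complex.
- by rewrite lk_matching_complex.
- by rewrite del_matching_complex.
- exact: (del_facet_is_facet gxw gxl leaf lw).
Qed.

Hypothesis branches : whiskered_branches g.

Lemma whisker_and_edge x : 1 < degree g x ->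
  exists l w, [/\ g x l, is_leaf g l, g x w & l != w].
Proof.
move=> dx; have [l /andP[gxl leaf]] := branches dx.
have [a [b [+ + ab]]] := card_gt1P dx; rewrite !inE => gxa gxb.
have [la|la] := eqVneq l a; last by exists l, a; split.
by exists l, b; split; rewrite // la.
Qed.

Lemma leaf_off_edge x w z l :
  g x w -> 1 < degree g x -> z != x -> g z l -> is_leaf g l -> (l != x) && (l != w).
Proof.
move=> gxw dx zx gzl leaf; apply/andP; split.
  by apply: contraTneq leaf => ->; rewrite /is_leaf gtn_eqF.
apply: contraNneq zx => lw; rewrite lw in leaf.
by apply/eqP; apply: (leaf_neighbour_uniq leaf); rewrite sym // -lw.
Qed.

Lemma branches_remove_edge x w l :
  g x w -> g x l -> is_leaf g l -> l != w -> 1 < degree g x ->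
  whiskered_branches (remove_edge g x w).
Proof.
move=> gxw gxl leaf lw dx z dz.
have xw : x != w by apply: contraTneq gxw => ->; rewrite irr.
have same_leaf a : a != x -> a != w -> is_leaf (remove_edge g x w) a = is_leaf g a.
  move=> ax aw; congr (_ == 1); apply: eq_card => y.
  by rewrite !inE /remove_edge (negbTE ax) (negbTE aw) andbT.
have [->|zx] := eqVneq z x.
  have lx : l != x by apply: contraTneq gxl => ->; rewrite irr.
  exists l; rewrite same_leaf // leaf andbT.
  by rewrite /remove_edge gxl eqxx (negbTE lw) (negbTE xw).
have dz' : 1 < degree g z by apply: leq_trans dz (degree_sub _ _) => a b /andP[].
have [l' /andP[gzl' leaf']] := branches dz'.
have /andP[l'x l'w] := leaf_off_edge gxw dx zx gzl' leaf'.
exists l'; rewrite same_leaf // leaf' andbT /remove_edge gzl' (negbTE zx) (negbTE l'x).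
by rewrite andbF.
Qed.

Lemma branches_remove_ends x w :
  g x w -> 1 < degree g x -> whiskered_branches (remove_ends g x w).
Proof.
move=> gxw dx z dz.
have [y [_ [+ _ _]]] := card_gt1P dz; rewrite !inE => /and3P[_ + _].
rewrite !inE negb_or => /andP[zx zw].
have dz' : 1 < degree g z by apply: leq_trans dz (degree_sub _ _) => a b /andP[].
have [l' /andP[gzl' leaf']] := branches dz'.
have /andP[l'x l'w] := leaf_off_edge gxw dx zx gzl' leaf'.
exists l'; apply/andP; split.
  by rewrite /remove_ends gzl' !inE !negb_or zx zw l'x l'w.
rewrite /is_leaf -(eqP leaf'); apply/eqP; apply: eq_card => a.
rewrite !inE /remove_ends !inE !negb_or l'x l'w /=.
apply/idP/idP => [/andP[]//|gl'a].
have az : a = z by apply: (leaf_neighbour_uniq leaf'); rewrite // sym.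
by rewrite gl'a az zx zw.
Qed.

End MatchingComplex.

Theorem whiskered_branches_vd (T : finType) (g : rel T) :
  simple_graph g -> whiskered_branches g -> vertex_decomposable (matching_complex g).
Proof.
have [n] := ubnP (edge_count g); elim: n g => // n IH g count_g simple branches.
have [sym irr] := simple.
have [x dx|small] := pickP (fun z => 1 < degree g z); last first.
  by apply/vd_simplex/matching_complex_simplex => // z; rewrite leqNgt small.
have [l [w [gxl leaf gxw lw]]] := whisker_and_edge branches dx.
have smaller (g' : rel T) :
    (forall a b, g' a b -> g a b) -> ~~ g' x w -> edge_count g' < n.
  by move=> sub ng'; rewrite -ltnS; apply: leq_trans count_g; apply: edge_count_sub gxw ng'.
apply: (vd_shed_edge sym irr gxw gxl leaf lw); apply: IH.
- apply: smaller => [a b /and3P[] //|]; by rewrite /remove_ends !inE eqxx andbF.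
- exact: simple_remove_ends.
- exact: branches_remove_ends.
- apply: smaller => [a b /andP[] //|]; by rewrite /remove_edge !eqxx andbF.
- exact: simple_remove_edge.
- exact: (branches_remove_edge sym irr branches gxw gxl leaf lw).
Qed.

Theorem corollary3p3 (T : finType) (g : rel T) :
  simple_graph g -> fully_whiskered g ->
  vertex_decomposable (matching_complex g).
Proof.
move=> simple fw.
exact: whiskered_branches_vd simple (fully_whiskered_branches fw).
Qed.
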